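(* Let $m\ge3$ be odd, let $s$ be an even positive integer not divisible by $4$, $n=sm$, and $\Gamma=C_n[mK_1]$. Define $$\sigma_1=(1,1,\dots,1,tc^{-1})r,\qquad \sigma_2=(t,\beta_2,\beta_3,\dots,\beta_n)z,\qquad G=\langle\sigma_1,\sigma_2\rangle,$$ where for $2\le i\le n$, $\beta_i=c$ if $i\equiv0$ or $3\pmod 4$ and $\beta_i=c^{-1}$ if $i\equiv1$ or $2\pmod4$ (so $\sigma_2=(t,c^{-1},c,c,c^{-1},c^{-1},\dots,c,c,c^{-1},c^{-1})z$). Then $\sigma_1$ has order $2n$, $\sigma_2$ has order $2m$, $\sigma_1\sigma_2$ has order $2$, and $|G|=4m^2n$.
   Context: $C_n[mK_1]$ is the graph with vertex set $\{1,\dots,n\}\times\{1,\dots,m\}$ in which $(i_1,j_1)$ is adjacent to $(i_2,j_2)$ if and only if $i_1\equiv i_2\pm1\pmod n$ (residues mod $n$ taken in $\{1,\dots,n\}$). Permutations act on the right ($x\alpha$ is the image of $x$) and products are composed left to right, both in $S_m$ and in $\mathrm{Aut}(\Gamma)$. For $\alpha_1,\dots,\alpha_n\in S_m$ and a permutation $x$ of $\{1,\dots,n\}$ in the dihedral group $D_n=\langle r,z\rangle$, $(\alpha_1,\dots,\alpha_n)x$ denotes the automorphism of $\Gamma$ mapping $(i,j)\mapsto(ix,\,j\alpha_i)$; $1$ denotes an identity permutation. Here $c=(1\,2\,\cdots\,m)\in S_m$; $t\in S_m$ fixes $1$ and maps $j\mapsto m-j+2$ for $2\le j\le m$; $r$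 is the permutation $i\mapsto i+1 \pmod n$ of $\{1,\dots,n\}$; and $z$ fixes $1$ and maps $j\mapsto n-j+2$ for $2\le j\le n$. *)

(* Vertices of C_n[mK_1] are encoded 0-indexed:
   (i, j) in {1..n} x {1..m} is (i-1, j-1) : 'I_n * 'I_m. *)
From mathcomp Require Import all_boot all_fingroup.
From mathcomp Require Import zify.
Set Implicit Arguments. Unset Strict Implicit. Unset Printing Implicit Defensive.

Lemma modS_small k a : a < k -> a.+1 %% k = if a.+1 == k then 0 else a.+1.
Proof. move=> H; case: eqP => [->|ne]; first by rewrite modnn. by rewrite modn_small; lia. Qed.
Lemma modB_small k a : a < k -> (k - a) %% k = if a == 0 then 0 else k - a.
Proof. move=> H; case: eqP => [->|ne]; first by rewrite subn0 modnn. by rewrite modn_small; lia. Qed.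

Local Lemma pos_ord k (j : 'I_k) : 0 < k.
Proof. by apply: leq_ltn_trans (ltn_ord j). Qed.

Definition rot_fun k (j : 'I_k) : 'I_k := Ordinal (ltn_pmod j.+1 (pos_ord j)).
Lemma rot_inj k : injective (@rot_fun k).
Proof.
move=> [a Ha] [b Hb] /(congr1 val) /= E; apply/val_inj => /=.
move: E; rewrite !modS_small //; do 2 case: eqP; lia.
Qed.
Definition rotp k : {perm 'I_k} := perm (@rot_inj k).

(* reflection fixing the first point: 1-indexed j |-> k - j + 2 (j >= 2), 1 |-> 1;
   0-indexed j |-> (k - j) mod k *)
Definition refl_fun k (j : 'I_k) : 'I_k := Ordinal (ltn_pmod (k - j) (pos_ord j)).
Lemma refl_inj k : injective (@refl_fun k).
Proof.
move=> [a Ha] [b Hb] /(congr1 val) /= E; apply/val_inj => /=.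
move: E; rewrite !modB_small //; do 2 case: eqP; lia.
Qed.
Definition reflp k : {perm 'I_k} := perm (@refl_inj k).

Definition cyc m : {perm 'I_m} := rotp m.
Definition tt_ m : {perm 'I_m} := reflp m.
Definition r_ n : {perm 'I_n} := rotp n.
Definition z_ n : {perm 'I_n} := reflp n.

(* (alpha_1, ..., alpha_n) x : (i, j) |-> (i x, j alpha_i).
   MathComp permutations compose left to right ((p * q) x = q (p x)),
   matching the paper's convention. *)
Definition wr_fun n m (a : 'I_n -> {perm 'I_m}) (x : {perm 'I_n})
  (v : 'I_n * 'I_m) : 'I_n * 'I_m := (x v.1, a v.1 v.2).
Lemma wr_inj n m a x : injective (@wr_fun n m a x).
Proof.
move=> [i1 j1] [i2 j2] [/perm_inj E1]; subst i2 => /perm_inj ->; done.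
Qed.
Definition wr n m a x : {perm 'I_n * 'I_m} := perm (@wr_inj n m a x).

Definition sigma1 n m : {perm 'I_n * 'I_m} :=
  wr (fun i : 'I_n => if i == n.-1 :> nat then (tt_ m * (cyc m)^-1)%g else 1%g) (r_ n).

Definition beta m (i : nat) : {perm 'I_m} :=
  if (i %% 4 == 0) || (i %% 4 == 3) then cyc m else (cyc m)^-1%g.

(* sigma_2 = (t, beta_2, ..., beta_n) z ; 0-indexed position i0 is 1-indexed i0+1 *)
Definition sigma2 n m : {perm 'I_n * 'I_m} :=
  wr (fun i : 'I_n => if i == 0 :> nat then tt_ m else beta m i.+1) (z_ n).

(* Identify each layer {i} x 'I_m of C_n[mK_1] with Z/m.  Both generators act
   on layers by maps x |-> +-x + c, so consider the permutations kappa p q e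
   fixing every layer and acting on layer i by x |-> (-1)^e x + th_i r_i - e,
   where r_i is p or q according to the parity of i and th_i = +-1 follows the
   pattern + + - - of i mod 4, like the beta_i.  They form a group K of order
   2m^2, normalised by sigma1, and K contains sigma2^2 and sigma1^n (the shift
   -e is there because sigma1^n acts by t c^-1 on every layer).  Together with
   (sigma1 sigma2)^2 = 1 this writes every element of G uniquely as
   kappa sigma1^k sigma2^f with k < n and f in {0,1}.  Conversely K <= G:
   sigma2^2 = kappa 0 (-2) false generates all kappa 0 q false since 2 is
   invertible mod the odd m, conjugation by sigma1 exchanges the roles of p
   and q, and sigma1^n = kappa 0 0 true. *)

From mathcomp Require Import all_boot all_fingroup all_algebra cyclic zify ring.
Import GRing.Theory.

Set Implicit Arguments. Unset Strict Implicit. Unset Printing Implicit Defensive.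

Lemma gen_sub_rmul_closed (gT : finGroupType) (A S : {set gT}) :
  1%g \in S -> (forall s x, s \in S -> x \in A -> (s * x)%g \in S) ->
  (<<A>> \subset S)%g.
Proof.
move=> S1 SA.
have stabS : group_set [set g | [forall s in S, (s * g)%g \in S]].
  apply/group_setP; split.
    by rewrite inE; apply/forall_inP => s Ss; rewrite mulg1.
  move=> x y; rewrite !inE => /forall_inP Sx /forall_inP Sy.
  by apply/forall_inP => s Ss; rewrite mulgA; apply/Sy/Sx.
have /subsetP genA : (<<A>> \subset Group stabS)%g.
  rewrite gen_subG; apply/subsetP => x Ax; rewrite inE.
  by apply/forall_inP => s Ss; apply: SA.
apply/subsetP => x /genA; rewrite inE => /forall_inP Sx.
by rewrite -(mul1g x); apply: Sx.
Qed.

Lemma modn_subl_small n r : r <= n -> (n - r) %% n = if r == 0 then 0 else n - r.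
Proof.
move=> le_rn; case: eqP => [->|nz_r]; first by rewrite subn0 modnn.
have [lt_rn|->] : r < n \/ r = n by lia.
  by rewrite modn_small; lia.
by rewrite subnn mod0n.
Qed.

Lemma mod4_cases i : [\/ i %% 4 = 0, i %% 4 = 1, i %% 4 = 2 | i %% 4 = 3].
Proof.
have : i %% 4 < 4 by rewrite ltn_mod.
by case: (i %% 4) => [|[|[|[|]]]]; constructor.
Qed.

Lemma natr_Zp_eq0 p k : 1 < p -> ((k%:R : 'Z_p) == 0)%R = (p %| k).
Proof. by move=> p_gt1; rewrite -val_eqE /= val_Zp_nat. Qed.

Lemma natr_Zp_pred p : 1 < p -> ((p.-1)%:R : 'Z_p)%R = (-1)%R.
Proof.
move=> p_gt1; have := pchar_Zp p_gt1; rewrite -(prednK (ltnW p_gt1)) mulrSr.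
by move/eqP; rewrite addr_eq0 => /eqP.
Qed.

Lemma Zp_one_neq_opp1 p : 2 < p -> (1 : 'Z_p)%R != (-1)%R.
Proof.
move=> p_gt2; rewrite -addr_eq0 -(natrD _ 1 1) natr_Zp_eq0 ?gtnNdvd //.
exact: ltnW.
Qed.

Section GeneratedGroup.
Variables m n : nat.
Hypotheses (m_gt2 : 2 < m) (m_odd : odd m) (n_gt2 : 2 < n) (n_mod4 : n %% 4 = 2).

Local Open Scope ring_scope.

Lemma m_gt1 : (1 < m)%N. Proof. lia. Qed.

Definition coord (j : 'I_m) : 'Z_m := (val j)%:R.

Lemma coord_inj : injective coord.
Proof.
move=> x y /(congr1 (@nat_of_ord _)); rewrite /coord !val_Zp_nat ?m_gt1 //.
by rewrite !modn_small ?ltn_ord // => /val_inj.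
Qed.

Lemma coord_cyc j : coord (cyc m j) = coord j + 1.
Proof. by rewrite /coord /cyc /rotp permE /= Zp_nat_mod ?m_gt1 // mulrS addrC. Qed.

Lemma coord_cycV j : coord ((cyc m)^-1%g j) = coord j - 1.
Proof. by rewrite -{2}(permKV (cyc m) j) coord_cyc addrK. Qed.

Lemma coord_cycX k j : coord ((cyc m ^+ k)%g j) = coord j + k%:R.
Proof.
elim: k => [|k IHk]; first by rewrite expg0 perm1 addr0.
by rewrite expgSr permM coord_cyc IHk mulrS; ring.
Qed.

Lemma coord_tt j : coord (tt_ m j) = - coord j.
Proof.
rewrite /coord /tt_ /reflp permE /= Zp_nat_mod ?m_gt1 // natrB ?(ltnW (ltn_ord j)) //.
by rewrite pchar_Zp ?m_gt1 // sub0r.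
Qed.

Definition theta (i : nat) : 'Z_m := if (i %% 4 < 2)%N then 1 else -1.

Lemma theta_lo i : (i %% 4 < 2)%N -> theta i = 1.
Proof. by rewrite /theta => ->. Qed.

Lemma theta_hi i : (2 <= i %% 4)%N -> theta i = -1.
Proof. by rewrite /theta leqNgt => /negbTE ->. Qed.

Lemma coord_beta i j : coord (beta m i j) = coord j + theta i.+1.
Proof.
rewrite /beta /theta; case: ifP => i03; case: ifP => i4 //; try lia.
  by rewrite coord_cyc.
by rewrite coord_cycV.
Qed.

Definition flip (e : bool) (x : 'Z_m) := if e then - x else x.

Definition affp (e : bool) (x : 'Z_m) : {perm 'I_m} :=
  ((if e then tt_ m else 1) * cyc m ^+ val x)%g.

Lemma coord_affp e x j : coord (affp e x j) = flip e (coord j) + x.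
Proof. by rewrite /affp permM coord_cycX natr_Zp; case: e; rewrite /= ?coord_tt ?perm1. Qed.

Definition kshift (p q : 'Z_m) (e : bool) (i : nat) : 'Z_m :=
  theta i * (if odd i then q else p) - (if e then 1 else 0).

Definition kappa p q e : {perm 'I_n * 'I_m} :=
  wr (fun i : 'I_n => affp e (kshift p q e (val i))) 1%g.

Definition layer (v : 'I_n * 'I_m) : nat := val v.1.
Definition level (v : 'I_n * 'I_m) : 'Z_m := coord v.2.

Lemma layer_lt v : (layer v < n)%N. Proof. exact: ltn_ord. Qed.

Lemma vertex_eq v w : layer v = layer w -> level v = level w -> v = w.
Proof. by case: v w => [i j] [i' j']; rewrite /layer /level /= => /val_inj -> /coord_inj ->. Qed.

Lemma layer_kappa p q e v : layer (kappa p q e v) = layer v.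
Proof. by rewrite /layer /kappa /wr permE /wr_fun perm1. Qed.

Lemma level_kappa p q e v :
  level (kappa p q e v) = flip e (level v) + kshift p q e (layer v).
Proof. by rewrite /layer /level /kappa /wr permE /wr_fun /= coord_affp. Qed.

Local Notation s1 := (sigma1 n m).
Local Notation s2 := (sigma2 n m).

Lemma layer_s1 v : layer (s1 v) = ((layer v).+1 %% n)%N.
Proof. by rewrite /layer /sigma1 /wr permE /wr_fun /= /r_ /rotp permE. Qed.

Lemma layer_s1E v : layer (s1 v) = if (layer v == n.-1)%N then 0%N else (layer v).+1.
Proof. by rewrite layer_s1 modS_small ?layer_lt //; case: eqP; case: eqP; lia. Qed.

Lemma level_s1 v :
  level (s1 v) = if (layer v == n.-1)%N then - level v - 1 else level v.
Proof.
rewrite /layer /level /sigma1 /wr permE /wr_fun /=.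
by case: ifP => _; rewrite ?permM ?coord_cycV ?coord_tt ?perm1.
Qed.

Lemma layer_s2 v : layer (s2 v) = ((n - layer v) %% n)%N.
Proof. by rewrite /layer /sigma2 /wr permE /wr_fun /= /z_ /reflp permE. Qed.

Lemma layer_s2E v : layer (s2 v) = if (layer v == 0)%N then 0%N else (n - layer v)%N.
Proof. by rewrite layer_s2 modn_subl_small // ltnW ?layer_lt. Qed.

Lemma level_s2 v :
  level (s2 v) = if (layer v == 0)%N then - level v else level v + theta (layer v).+2.
Proof.
rewrite /layer /level /sigma2 /wr permE /wr_fun /=.
by case: ifP => _; rewrite ?coord_tt ?coord_beta.
Qed.

Ltac eval_theta := repeat match goal with
  | |- context [theta ?x] =>
      first [rewrite (@theta_lo x); last lia | rewrite (@theta_hi x); last lia]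
  end.

Ltac case_ifs := repeat match goal with |- context [if ?c then _ else _] =>
  lazymatch c with context [if _ then _ else _] => fail | _ =>
    let Hc := fresh "Hc" in case Hc : c end end.

Lemma kappaM p q e p' q' e' :
  (kappa p q e * kappa p' q' e' = kappa (flip e' p + p') (flip e' q + q') (e (+) e'))%g.
Proof.
apply/permP => v; apply: vertex_eq; rewrite !permM ?layer_kappa //.
rewrite !level_kappa layer_kappa /kshift /flip.
by case: e e' => [] [] /=; case: (odd _); ring.
Qed.

Lemma kappa0 : kappa 0 0 false = 1%g.
Proof.
apply/permP => v; apply: vertex_eq; rewrite perm1 ?layer_kappa ?level_kappa //.
by rewrite /flip /kshift /=; case: (odd _); ring.
Qed.

Lemma s1_kappa p q e : (s1 * kappa p q e = kappa q (- p) e * s1)%g.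
Proof.
apply/permP => v; apply: vertex_eq; rewrite !permM.
  by rewrite layer_kappa !layer_s1 layer_kappa.
rewrite level_kappa level_s1 layer_s1E level_s1 level_kappa layer_kappa /kshift /flip.
by case: e; case: (mod4_cases (layer v)) => i4 /=; case_ifs; try lia; eval_theta; ring.
Qed.

Lemma s2_sqr : (s2 * s2 = kappa 0 (-2) false)%g.
Proof.
apply/permP => v; have lt_vn := layer_lt v; apply: vertex_eq; rewrite permM.
  by rewrite layer_kappa !layer_s2E; case_ifs; lia.
rewrite level_kappa !level_s2 layer_s2E /flip /kshift.
by case: (mod4_cases (layer v)) => i4; case_ifs; try lia; eval_theta; ring.
Qed.

Lemma s1s2_sqr : ((s1 * s2) * (s1 * s2) = 1)%g.
Proof.
apply/permP => v; have lt_vn := layer_lt v; apply: vertex_eq; rewrite perm1 !permM.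
  by rewrite layer_s2E layer_s1E layer_s2E layer_s1E; case_ifs; lia.
rewrite level_s2 level_s1 level_s2 level_s1; do 3 rewrite ?layer_s1E ?layer_s2E.
by case: (mod4_cases (layer v)) => i4; case_ifs; try lia; eval_theta; ring.
Qed.

Lemma n_gt0 : (0 < n)%N. Proof. lia. Qed.
Lemma n_gt1 : (1 < n)%N. Proof. lia. Qed.
Lemma m_gt0 : (0 < m)%N. Proof. lia. Qed.

Definition i0 : 'I_n := Ordinal n_gt0.
Definition i1 : 'I_n := Ordinal n_gt1.
Definition j0 : 'I_m := Ordinal m_gt0.
Definition j1 : 'I_m := Ordinal m_gt1.

Lemma kappa_inj p q e p' q' e' :
  kappa p q e = kappa p' q' e' -> [/\ p = p', q = q' & e = e'].
Proof.
move=> E; have lv v : level (kappa p q e v) = level (kappa p' q' e' v) by rewrite E.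
have flip0 f : flip f 0 = 0 by case: f; rewrite /= ?oppr0.
have := lv (i0, j1); have := lv (i1, j0); have := lv (i0, j0).
rewrite !level_kappa /level /layer /= /coord /= !flip0 !add0r /kshift.
rewrite (@theta_lo 0) ?(@theta_lo 1) //= !mul1r => Hp Hq H1.
have ee' : e = e'.
  have : flip e 1 = flip e' 1 by move: H1; rewrite Hp => /addIr.
  have /negbTE one_neq_opp1 := Zp_one_neq_opp1 m_gt2.
  by case: e e' {E lv Hp Hq H1} => [] [] //= /eqP; rewrite ?(eq_sym (-1)) one_neq_opp1.
by subst e'; move/addIr: Hp => ->; move/addIr: Hq => ->.
Qed.

Lemma layer_s1X k v : layer ((s1 ^+ k)%g v) = ((layer v + k) %% n)%N.
Proof.
elim: k => [|k IHk]; first by rewrite expg0 perm1 addn0 modn_small ?layer_lt.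
by rewrite expgSr permM layer_s1 IHk -addn1 modnDml addn1 addnS.
Qed.

Lemma level_s1X k v : (k <= n)%N ->
  level ((s1 ^+ k)%g v) = if (layer v + k < n)%N then level v else - level v - 1.
Proof.
have lt_vn := layer_lt v.
elim: k => [|k IHk] le_kn; first by rewrite expg0 perm1 addn0 lt_vn.
rewrite expgSr permM level_s1 IHk ?layer_s1X; last exact: ltnW.
have [lt_kn|ge_kn] := ltnP (layer v + k) n.
  by rewrite modn_small //; case_ifs; try lia; ring.
rewrite (_ : (layer v + k) %% n = layer v + k - n)%N.
  by case_ifs; try lia; ring.
by rewrite -{1}(subnK ge_kn) modnDr modn_small; lia.
Qed.

Lemma s1_expn : (s1 ^+ n = kappa 0 0 true)%g.
Proof.
apply/permP => v; have lt_vn := layer_lt v; apply: vertex_eq.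
  by rewrite layer_s1X layer_kappa -modnDmr modnn addn0 modn_small.
rewrite level_s1X // level_kappa ltnNge leq_addl /= /flip /kshift.
by case: (odd _); ring.
Qed.

Lemma kappa_flipX d : (kappa 0 0 true ^+ d = kappa 0 0 (odd d))%g.
Proof.
elim: d => [|d IHd]; first by rewrite expg0 kappa0.
by rewrite expgSr IHd kappaM /flip /= oppr0 !addr0 addbT.
Qed.

Lemma s1_exp2n : (s1 ^+ (2 * n) = 1)%g.
Proof. by rewrite mulnC expgM s1_expn kappa_flipX kappa0. Qed.

Lemma s1X_kappa k p q e :
  exists p' q', (s1 ^+ k * kappa p q e = kappa p' q' e * s1 ^+ k)%g.
Proof.
elim: k p q => [|k IHk] p q; first by exists p, q; rewrite expg0 mul1g mulg1.
have [p1 [q1 E1]] := IHk p q; exists q1, (- p1).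
by rewrite expgS -mulgA E1 mulgA s1_kappa -mulgA.
Qed.

Lemma kappa0X x k : (kappa 0 x false ^+ k = kappa 0 (x *+ k) false)%g.
Proof.
elim: k => [|k IHk]; first by rewrite expg0 mulr0n kappa0.
by rewrite expgSr IHk kappaM /flip /= addr0 mulrSr.
Qed.

Lemma s2X_double k : (s2 ^+ (2 * k) = kappa 0 (- (2 * k)%:R) false)%g.
Proof. by rewrite expgM expgS expg1 s2_sqr kappa0X mulNrn natrM mulr_natr. Qed.

Definition nf_index := ('Z_m * 'Z_m * bool * 'I_n * bool)%type.

Definition nf (x : nf_index) : {perm 'I_n * 'I_m} :=
  let: (p, q, e, k, f) := x in (kappa p q e * s1 ^+ k * s2 ^+ f)%g.

Definition NF := [set nf x | x : nf_index].

Lemma mem_NF p q e k (f : bool) : (kappa p q e * s1 ^+ k * s2 ^+ f)%g \in NF.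
Proof.
have -> : (s1 ^+ k = kappa 0 0 (odd (k %/ n)) * s1 ^+ (k %% n))%g.
  by rewrite {1}(divn_eq k n) expgD mulnC expgM s1_expn kappa_flipX.
rewrite mulgA kappaM; apply/imsetP.
set d := odd (k %/ n).
by exists (flip d p + 0, flip d q + 0, e (+) d, Ordinal (ltn_pmod k n_gt0), f).
Qed.

Lemma mem_NF0 p q e k : (kappa p q e * s1 ^+ k)%g \in NF.
Proof. by have := mem_NF p q e k false; rewrite /= expg0 mulg1. Qed.

Lemma mem_NF1 p q e k : (kappa p q e * s1 ^+ k * s2)%g \in NF.
Proof. by have := mem_NF p q e k true; rewrite /= expg1. Qed.

Lemma s2_s1 : (s2 * s1 = s1 ^+ (2 * n).-1 * kappa 0 2 false * s2)%g.
Proof.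
have s1V : (s1^-1 = s1 ^+ (2 * n).-1)%g.
  by apply/esym/eqP; rewrite eq_mulgV1 invgK -expgSr prednK ?s1_exp2n ?muln_gt0 ?n_gt0.
have s2V : (s2^-1 = kappa 0 2 false * s2)%g.
  apply/esym/eqP; rewrite eq_mulgV1 invgK -mulgA s2_sqr kappaM /flip /= addr0 subrr.
  by rewrite kappa0.
rewrite -mulgA -s1V -s2V; apply: (mulgI s1); apply: (mulIg s2).
by rewrite mulKVg mulVg -s1s2_sqr !mulgA.
Qed.

Lemma NF_rmul_s1 g : g \in NF -> (g * s1)%g \in NF.
Proof.
case/imsetP => [[[[[p q] e] k] [|]] _ ->] /=.
  rewrite expg1 -mulgA s2_s1 !mulgA -(mulgA _ (s1 ^+ k)%g) -expgD -(mulgA _ (s1 ^+ _)%g).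
  have [p' [q' ->]] := s1X_kappa (k + (2 * n).-1) 0 2 false.
  by rewrite mulgA kappaM mem_NF1.
by rewrite expg0 mulg1 -mulgA -expgSr mem_NF0.
Qed.

Lemma NF_rmul_s2 g : g \in NF -> (g * s2)%g \in NF.
Proof.
case/imsetP => [[[[[p q] e] k] [|]] _ ->] /=.
  rewrite expg1 -mulgA s2_sqr -mulgA.
  have [p' [q' ->]] := s1X_kappa k 0 (-2) false.
  by rewrite mulgA kappaM mem_NF0.
by rewrite expg0 mulg1 mem_NF1.
Qed.

Local Notation G := (<<[set s1; s2]>>)%g.

Lemma s1_in_G : s1 \in G. Proof. by rewrite mem_gen // !inE eqxx. Qed.
Lemma s2_in_G : s2 \in G. Proof. by rewrite mem_gen // !inE eqxx orbT. Qed.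

Lemma kappa_in_G p q e : kappa p q e \in G.
Proof.
have flipG : kappa 0 0 e \in G.
  by case: e; rewrite ?kappa0 ?group1 // -s1_expn groupX ?s1_in_G.
have k01 : kappa 0 1 false \in G.
  have -> : kappa 0 1 false = (s2 ^+ (2 * m./2))%g.
    rewrite s2X_double (_ : (2 * m./2 = m.-1)%N) ?(natr_Zp_pred m_gt1) ?opprK //.
    by have := odd_double_half m; rewrite m_odd; lia.
  by rewrite groupX ?s2_in_G.
have k0q : kappa 0 q false \in G by rewrite -(natr_Zp q) -kappa0X groupX.
have kp0 : kappa p 0 false \in G.
  have := s1_kappa 0 p false; rewrite oppr0 => /esym/(canRL (mulgK _)) ->.
  by rewrite !groupM ?groupV ?s1_in_G // -(natr_Zp p) -kappa0X groupX.
have -> : kappa p q e = (kappa 0 0 e * (kappa p 0 false * kappa 0 q false))%g.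
  by rewrite !kappaM /flip /= addr0 !add0r addbF.
by rewrite !groupM.
Qed.

Lemma G_eq_NF : G = NF.
Proof.
apply/eqP; rewrite eqEsubset; apply/andP; split.
  apply: gen_sub_rmul_closed => [|g x NFg].
    by have := mem_NF0 0 0 false 0; rewrite expg0 mulg1 kappa0.
  by case/set2P=> ->; [apply: NF_rmul_s1 | apply: NF_rmul_s2].
apply/subsetP => _ /imsetP [[[[[p q] e] k] f] _ ->].
by rewrite !groupM ?groupX ?kappa_in_G ?s1_in_G ?s2_in_G.
Qed.

Lemma layer_nf p q e (k : 'I_n) (f : bool) v :
  layer (nf (p, q, e, k, f) v) =
  if f then ((n - (layer v + k) %% n) %% n)%N else ((layer v + k) %% n)%N.
Proof. by case: f; rewrite /nf !permM ?expg1 ?expg0 ?perm1 ?layer_s2 layer_s1X layer_kappa. Qed.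

Lemma nf_inj : injective nf.
Proof.
move=> [[[[p q] e] k] f] [[[[p' q'] e'] k'] f'] E.
have lay i : layer (nf (p, q, e, k, f) (i, j0)) = layer (nf (p', q', e', k', f') (i, j0)).
  by rewrite E.
have [kk' ff'] : k = k' /\ f = f'.
  have [lt_kn lt_k'n] := (ltn_ord k, ltn_ord k').
  move: (lay i0) (lay i1); rewrite !layer_nf /layer /= !add0n !add1n.
  rewrite (modn_small lt_kn) (modn_small lt_k'n) (modS_small lt_kn) (modS_small lt_k'n).
  case: f f' {E lay} => [] [] /=; case_ifs; rewrite ?modn_subl_small; try lia; case_ifs; try lia;
    by split=> //; apply: val_inj => /=; lia.
by subst k' f'; move: E => /= /mulIg /mulIg /kappa_inj [-> -> ->].
Qed.

Lemma card_G : #|G| = (4 * m ^ 2 * n)%N.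
Proof.
rewrite G_eq_NF card_imset; last exact: nf_inj.
rewrite !card_prod card_ord card_bool card_ord Zp_cast ?m_gt1 //.
by rewrite !expnS expn0; lia.
Qed.

Lemma order_s1 : #[s1]%g = (2 * n)%N.
Proof.
have n_dvd : (n %| #[s1]%g)%N.
  have := congr1 (fun g : {perm _} => layer (g (i0, j0))) (expg_order s1).
  by rewrite /= layer_s1X perm1 /layer /= add0n /dvdn => ->.
have [l def_l] := dvdnP n_dvd.
have even_l : ~~ odd l.
  apply/negP => odd_l; have := expg_order s1.
  by rewrite def_l mulnC expgM s1_expn kappa_flipX odd_l -kappa0 => /kappa_inj [].
have l_dvd2 : (l %| 2)%N by rewrite -(dvdn_pmul2r n_gt0) -def_l order_dvdn s1_exp2n.
suff l_eq2 : l = 2%N by rewrite def_l l_eq2 mulnC.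
by move: l_dvd2 even_l (@dvdn_leq l 2 isT l_dvd2); case: l {def_l} => [|[|[|l]]].
Qed.

Lemma order_s2 : #[s2]%g = (2 * m)%N.
Proof.
have even_d : ~~ odd #[s2]%g.
  apply/negP => odd_d.
  have := congr1 (fun g : {perm _} => layer (g (i1, j0))) (expg_order s2).
  rewrite -(odd_double_half #[s2]%g) odd_d -mul2n expgD expg1 s2X_double /=.
  by rewrite permM layer_kappa layer_s2 perm1 /layer /= modn_subl_small //; case_ifs; lia.
have m_dvd : (m %| #[s2]%g)%N.
  have := expg_order s2.
  rewrite -(odd_double_half #[s2]%g) (negbTE even_d) add0n -mul2n s2X_double -kappa0.
  by case/kappa_inj => _ /eqP; rewrite oppr_eq0 natr_Zp_eq0 ?m_gt1.
apply/eqP; rewrite eqn_dvd order_dvdn s2X_double natrM pchar_Zp ?m_gt1 // mulr0 oppr0.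
by rewrite kappa0 eqxx Gauss_dvd ?coprime2n // dvdn2 even_d m_dvd.
Qed.

Lemma order_s1s2 : #[(s1 * s2)%g]%g = 2%N.
Proof.
apply/prime_nt_dvdP => //; last by rewrite order_dvdn expgS expg1 s1s2_sqr.
rewrite order_eq1; apply/eqP => s1s2_eq1.
have := congr1 (fun g : {perm _} => layer (g (i0, j0))) s1s2_eq1.
by rewrite /= permM layer_s2E layer_s1E perm1 /layer /=; case_ifs; lia.
Qed.

End GeneratedGroup.

Theorem lemma5p4 (m s : nat) :
  3 <= m -> odd m -> 0 < s -> 2 %| s -> ~~ (4 %| s) ->
  let n := s * m in
  [/\ #[sigma1 n m]%g = 2 * n,
      #[sigma2 n m]%g = 2 * m,
      #[(sigma1 n m * sigma2 n m)%g]%g = 2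
    & #|<<[set sigma1 n m; sigma2 n m]>>%g| = 4 * m ^ 2 * n].
Proof.
move=> m_gt2 m_odd s_gt0 two_dvd_s four_ndvd_s n.
have s_mod4 : s %% 4 = 2 by lia.
have n_mod4 : n %% 4 = 2.
  rewrite /n -modnMm s_mod4.
  by have [->|->] : m %% 4 = 1 \/ m %% 4 = 3 by lia.
have n_gt2 : 2 < n by apply: leq_trans (leq_mul (_ : 2 <= s) m_gt2); lia.
split; [exact: order_s1 | exact: order_s2 | exact: order_s1s2 | exact: card_G].
Qed.
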